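(* Let $k\ge 2$ and $\alpha\in[0,1)$ be such that $b=\frac{k-1}{1-\alpha}$ is an integer, and let $n$ be a positive integer divisible by $b$; put $t=\alpha n$ (an integer). Then \[ S(n,t,k)\ \ge\ \binom{b}{\alpha b}^{n/b}. \]
   Context: A $k$-CNF formula is a conjunction of clauses (disjunctions of literals) each of width at most $k$. $\mathrm{sat}_t(F)$ is the set of satisfying assignments of $F$ of Hamming weight exactly $t$. $F$ is $t$-admissible if it has no satisfying assignment of Hamming weight less than $t$. $S(n,t,k)$ is the maximum of $|\mathrm{sat}_t(F)|$ over all $t$-admissible $k$-CNF formulas $F$ on $n$ variables. *)

From mathcomp Require Import all_boot all_order all_algebra.
Set Implicit Arguments. Unset Strict Implicit. Unset Printing Implicit Defensive.

(* A literal is a pair (i, b): b = true means x_i, b = false means ~x_i. *)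
Definition literal (n : nat) := ('I_n * bool)%type.
Definition clause (n : nat) := {set literal n}.
Definition cnf (n : nat) := {set clause n}.
Definition assignment (n : nat) := {ffun 'I_n -> bool}.

Definition lit_sat n (a : assignment n) (l : literal n) : bool := a l.1 == l.2.
Definition clause_sat n (a : assignment n) (C : clause n) : bool :=
  [exists l in C, lit_sat a l].
Definition cnf_sat n (a : assignment n) (F : cnf n) : bool :=
  [forall C in F, clause_sat a C].

Definition weight n (a : assignment n) : nat := #|[set i | a i]|.

Definition is_kCNF n (k : nat) (F : cnf n) : bool := [forall C in F, #|C| <= k].

Definition sat_t n (t : nat) (F : cnf n) : {set assignment n} :=
  [set a | cnf_sat a F & weight a == t].

Definition admissible n (t : nat) (F : cnf n) : bool :=
  [forall a : assignment n, cnf_sat a F ==> (t <= weight a)].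

Definition S (n t k : nat) : nat :=
  \max_(F : cnf n | is_kCNF k F && admissible t F) #|sat_t t F|.

From mathcomp Require Import all_boot all_order all_algebra.
From mathcomp Require Import zify ring.
Set Implicit Arguments. Unset Strict Implicit. Unset Printing Implicit Defensive.
Import Order.TTheory GRing.Theory Num.Theory.

(* Split the n = m b variables into m blocks of size b and take every positive
   clause of width k inside a block.  An assignment satisfies this k-CNF iff each
   block has fewer than k zeros, i.e. at least b - (k - 1) = a ones; so the
   formula is (m a)-admissible, and every choice of exactly a ones in each block
   gives a satisfying assignment of weight m a, that is 'C(b, a)^m of them. *)

Lemma leq_card_in_into (T T' : finType) (A : {pred T}) (B : {pred T'}) (f : T -> T') :
  {in A &, injective f} -> {in A, forall x, f x \in B} -> #|A| <= #|B|.
Proof.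
move=> f_inj fAB; rewrite -(card_in_imset f_inj); apply: subset_leq_card.
by apply/subsetP => _ /imsetP [x xA ->]; apply: fAB.
Qed.

Section Blocks.

Variables m b : nat.

(* Variable [mxvec_index j x] is the x-th variable of block j. *)
Definition vec_index (i : 'I_(m * b)) : 'I_m * 'I_b :=
  enum_val (cast_ord (esym (mxvec_cast m b)) i).

Lemma vec_indexK (j : 'I_m) (x : 'I_b) : vec_index (mxvec_index j x) = (j, x).
Proof. by rewrite /vec_index /mxvec_index cast_ordK enum_rankK. Qed.

Lemma mxvec_indexK (i : 'I_(m * b)) :
  mxvec_index (vec_index i).1 (vec_index i).2 = i.
Proof. by rewrite /mxvec_index -surjective_pairing enum_valK cast_ordKV. Qed.

Lemma big_mxvec_index (F : 'I_(m * b) -> nat) :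
  \sum_(i < m * b) F i = \sum_(j < m) \sum_(x < b) F (mxvec_index j x).
Proof.
rewrite pair_big /= (reindex (fun p : 'I_m * 'I_b => mxvec_index p.1 p.2)) //=.
by exists vec_index => [[j x] _ | i _]; rewrite ?vec_indexK ?mxvec_indexK.
Qed.

Definition block_ones (a : assignment (m * b)) (j : 'I_m) : {set 'I_b} :=
  [set x | a (mxvec_index j x)].

Lemma weight_block_ones (a : assignment (m * b)) :
  weight a = \sum_(j < m) #|block_ones a j|.
Proof.
rewrite /weight -sum1_card big_mkcond /= big_mxvec_index.
apply: eq_bigr => j _; rewrite -sum1_card [RHS]big_mkcond /=.
by apply: eq_bigr => x _; rewrite !inE.
Qed.

Lemma card_block_zeros (a : assignment (m * b)) (j : 'I_m) :
  #|~: block_ones a j| = b - #|block_ones a j|.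
Proof. by rewrite cardsCs setCK card_ord. Qed.

Variable k : nat.

Definition block_cnf : cnf (m * b) :=
  [set [set (mxvec_index j x, true) | x in s]
     | j : 'I_m, s : {set 'I_b} in [set s : {set 'I_b} | #|s| == k]].

Lemma card_block_clause (j : 'I_m) (s : {set 'I_b}) :
  #|[set (mxvec_index j x, true) | x in s]| = #|s|.
Proof.
apply: card_in_imset => x y _ _ eq_lit.
by have := congr1 (fun l => vec_index l.1) eq_lit; rewrite /= !vec_indexK => -[].
Qed.

Lemma block_cnf_kCNF : is_kCNF k block_cnf.
Proof.
apply/forallP => C; apply/implyP => /imset2P [j s _].
by rewrite inE => /eqP <- ->; rewrite card_block_clause.
Qed.

Lemma cnf_sat_block_cnf (a : assignment (m * b)) :
  cnf_sat a block_cnf = [forall j, #|~: block_ones a j| < k].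
Proof.
apply/forallP/forallP => [sat_a j | few_zeros C].
  rewrite ltnNge; apply/negP => /card_geqP [s [s_uniq s_size s_zeros]].
  have /implyP := sat_a [set (mxvec_index j x, true) | x in [set x in s]].
  rewrite imset2_f ?inE ?cardsE ?(card_uniqP s_uniq) ?s_size //=.
  move=> /(_ isT) /existsP [_ /andP [/imsetP [x xs ->]]].
  rewrite inE in xs; have := s_zeros x xs.
  by rewrite !inE /lit_sat /= => /negPf ->.
apply/implyP => /imset2P [j s _]; rewrite inE => /eqP s_size ->.
have := few_zeros j; apply: contraLR; rewrite -leqNgt -s_size => /existsPn all_false.
apply/subset_leq_card/subsetP => x xs; have := all_false (mxvec_index j x, true).
by rewrite imset_f //= !inE /lit_sat /= eqb_id.
Qed.

Lemma admissible_block_cnf : 0 < k -> admissible (m * (b - k.-1)) block_cnf.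
Proof.
move=> k_gt0; apply/forallP => a; apply/implyP.
rewrite cnf_sat_block_cnf weight_block_ones => /forallP few_zeros.
rewrite -[m in m * _]card_ord -sum_nat_const; apply: leq_sum => j _.
have := few_zeros j; rewrite card_block_zeros; lia.
Qed.

Lemma binomial_pow_le_card_sat_t (a0 : nat) :
  b - a0 < k -> 'C(b, a0) ^ m <= #|sat_t (m * a0) block_cnf|.
Proof.
move=> few_zeros.
pose choices := @ffun_on 'I_m [set s : {set 'I_b} | #|s| == a0].
have -> : 'C(b, a0) ^ m = #|choices| by rewrite card_ffun_on card_draws !card_ord.
pose assign (f : {ffun 'I_m -> {set 'I_b}}) : assignment (m * b) :=
  [ffun i => (vec_index i).2 \in f (vec_index i).1].
have block_ones_assign f j : block_ones (assign f) j = f j.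
  by apply/setP => x; rewrite !inE ffunE vec_indexK.
apply: (@leq_card_in_into _ _ _ _ assign).
  move=> f1 f2 _ _ eq_assign; apply/ffunP => j.
  by rewrite -block_ones_assign eq_assign block_ones_assign.
move=> f /ffun_onP f_size; have {}f_size j : #|f j| = a0.
  by apply/eqP; have := f_size j; rewrite inE.
rewrite inE cnf_sat_block_cnf weight_block_ones; apply/andP; split.
  by apply/forallP => j; rewrite card_block_zeros block_ones_assign f_size.
rewrite -[m in _ == m * _]card_ord -sum_nat_const; apply/eqP/eq_bigr => j _.
by rewrite block_ones_assign.
Qed.

End Blocks.

Lemma S_ge_binomial_pow (m b k a0 : nat) :
  0 < k -> a0 + k.-1 = b -> 'C(b, a0) ^ m <= S (m * b) (m * a0) k.
Proof.
move=> k_gt0 b_def.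
have few_zeros : b - a0 < k by lia.
have a0_def : a0 = b - k.-1 by lia.
apply: leq_trans (binomial_pow_le_card_sat_t m few_zeros) _.
apply: (leq_bigmax_cond (block_cnf m b k)).
by rewrite block_cnf_kCNF {1}a0_def admissible_block_cnf.
Qed.

Local Open Scope ring_scope.

Theorem theorem2 (R : realFieldType) (k : nat) (alpha : R) (b n t a : nat) :
  (2 <= k)%N ->
  0 <= alpha -> alpha < 1 ->
  (b%:R : R) = (k.-1)%:R / (1 - alpha) ->
  (0 < n)%N -> (b %| n)%N ->
  (t%:R : R) = alpha * n%:R ->
  (a%:R : R) = alpha * b%:R ->
  ('C(b, a) ^ (n %/ b) <= S n t k)%N.
Proof.
move=> k_ge2 _ alpha_lt1 b_def n_gt0 /dvdnP [m n_def] t_def a_def.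
have k_pred : (k.-1)%:R = b%:R * (1 - alpha) :> R.
  by rewrite b_def divfK // subr_eq0 eq_sym lt_eqF.
have b_split : (a + k.-1)%N = b.
  by apply/eqP; rewrite -(eqr_nat R) natrD a_def k_pred; apply/eqP; ring.
have t_eq : t = (m * a)%N.
  by apply/eqP; rewrite -(eqr_nat R) t_def n_def !natrM a_def; apply/eqP; ring.
have b_gt0 : (0 < b)%N by lia.
by rewrite n_def mulnK // t_eq; apply: S_ge_binomial_pow => //; lia.
Qed.
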